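(* Let $C\in\mathbb{R}^{m\times k}$ with $\operatorname{rank}(C)=k$, and let $C_\ell\in\mathbb{R}^{m\times\ell}$ be a column submatrix of $C$, $1\le\ell<k$. Then $\operatorname{rvol}(C)\le\operatorname{rvol}(C_\ell)\le\operatorname{rvol}(C_1)=1$, where $C_1$ denotes any single column of $C$.
   Context: A column submatrix consists of a subset of the columns of $C$. For a matrix $X$ with $r$ columns and singular values $\sigma_1(X)\ge\cdots\ge\sigma_r(X)$, the relative volume is $\operatorname{rvol}(X)=\prod_{j=1}^r\sigma_j(X)/\sigma_1(X)$. *)

From HB Require Import structures.
From mathcomp Require Import all_boot all_order all_algebra.
From mathcomp Require Import reals.
Set Implicit Arguments. Unset Strict Implicit. Unset Printing Implicit Defensive.
Import Order.TTheory GRing.Theory Num.Theory.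
Local Open Scope ring_scope.

Definition is_singular_values (R : realType) (m r : nat)
    (X : 'M[R]_(m, r)) (s : 'I_r -> R) : Prop :=
  (forall i, 0 <= s i) /\
  (forall i j : 'I_r, (i <= j)%N -> s j <= s i) /\
  char_poly (X^T *m X) = \prod_(i < r) ('X - (s i ^+ 2)%:P).

Definition sigma1 (R : realType) (r : nat) (s : 'I_r -> R) : R :=
  \big[Num.max/0]_(i < r) s i.

Definition rvol (R : realType) (r : nat) (s : 'I_r -> R) : R :=
  \prod_(i < r) (s i / sigma1 s).

(* Let G = C^T C, whose eigenvalues are the squared singular values, so that
   rvol C = sqrt (det G) / sigma_1(C)^k.  Permuting the columns, write C = [C_l B].
   Replacing B by its component B' orthogonal to the columns of C_l does not change
   det G and makes G block diagonal, so det G = det (C_l^T C_l) det (B'^T B'); since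
   B'^T B' <= B^T B <= sigma_1(C)^2 I, det G <= det (C_l^T C_l) sigma_1(C)^(2(k-l)).
   The Rayleigh quotient also gives sigma_1(C_l) <= sigma_1(C), and the two bounds
   together give rvol C <= rvol C_l.  The spectral theorem is available only over
   an algebraically closed field, so these facts are proved for complex matrices
   and transferred to real ones.  Finally rvol C_l <= 1 termwise, and rvol C_1 = 1
   because full column rank makes every column nonzero. *)

From HB Require Import structures.
From mathcomp Require Import all_boot all_order all_algebra.
From mathcomp Require Import reals complex.
Import Order.TTheory GRing.Theory Num.Theory.
Local Open Scope ring_scope.
Set Implicit Arguments. Unset Strict Implicit. Unset Printing Implicit Defensive.

Lemma ler_wdiv2l (F : realFieldType) (x a b : F) :
  0 <= x -> x <= a -> a <= b -> x / b <= x / a.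
Proof.
move=> x_ge0 xa ab; have [a0|a_neq0] := eqVneq a 0.
  have -> : x = 0 by apply/le_anti; rewrite x_ge0 -a0 xa.
  by rewrite !mul0r.
have a_gt0 : 0 < a by rewrite lt_def a_neq0 (le_trans x_ge0 xa).
by rewrite ler_wpM2l // lef_pV2 ?posrE // (lt_le_trans a_gt0 ab).
Qed.

Lemma ler_mulr_expr_divD (F : realFieldType) (x s : F) l r :
  0 <= x -> 0 <= s -> x * s ^+ r / s ^+ (l + r) <= x / s ^+ l.
Proof.
move=> x_ge0 s_ge0; have [->|s_neq0] := eqVneq s 0.
  case: r => [|r]; first by rewrite expr0 mulr1 addn0.
  by rewrite expr0n mulr0 mul0r divr_ge0 ?exprn_ge0.
by rewrite exprD invfM [(s ^+ l)^-1 * _]mulrC mulrA mulfK ?expf_neq0.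
Qed.

Lemma eigenvalue_split_char_poly (F : fieldType) n (A : 'M[F]_n) (c : 'I_n -> F) t :
  char_poly A = \prod_i ('X - (c i)%:P) -> eigenvalue A t -> exists i, t = c i.
Proof.
rewrite eigenvalue_root_char => -> /[!(rootE, horner_prod)] /prodf_eq0[i _].
by rewrite hornerXsubC subr_eq0 => /eqP ->; exists i.
Qed.

Lemma det_split_char_poly (R : comNzRingType) n (A : 'M[R]_n) (c : 'I_n -> R) :
  char_poly A = \prod_i ('X - (c i)%:P) -> \det A = \prod_i c i.
Proof.
move=> cpA; have := char_poly_det A; rewrite cpA -horner_coef0 horner_prod.
under eq_bigr do rewrite hornerXsubC sub0r.
by rewrite prodrN card_ord => /(can_inj (signrMK n)).
Qed.

Lemma ord_complement l r (f : 'I_l -> 'I_(l + r)) : injective f ->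
  exists h : 'I_r -> 'I_(l + r), injective h /\ forall i j, f i != h j.
Proof.
move=> f_inj; set A := ~: [set f i | i in 'I_l].
have cardA : r = #|A|.
  have := cardsC [set f i | i in 'I_l].
  by rewrite card_imset // !card_ord => /eqP; rewrite eqn_add2l => /eqP.
exists (fun j => enum_val (cast_ord cardA j)); split.
  by move=> j j' /enum_val_inj /cast_ord_inj.
move=> i j; have := enum_valP (cast_ord cardA j); rewrite inE.
by apply: contra => /eqP <-; apply: imset_f.
Qed.

Section HermitianForms.
Variable K : numClosedFieldType.
Local Open Scope sesquilinear_scope.
Local Notation "''[' u , v ]" := (dotmx u v) : ring_scope.
Local Notation "''[' u ]" := (dotmx u u) : ring_scope.
Implicit Types (m n p : nat).

Definition gram m n (X : 'M[K]_(m, n)) := X ^t* *m X.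

(* The squared operator norm of X, i.e. sigma_1(X)^2, is at most mu. *)
Definition opnorm_sqr_le m n (X : 'M[K]_(m, n)) (mu : K) :=
  forall u : 'rV_n, '[u *m X ^t*] <= mu * '[u].

Lemma adjmxM m n p (A : 'M[K]_(m, n)) (B : 'M[K]_(n, p)) :
  (A *m B) ^t* = B ^t* *m A ^t*.
Proof. by rewrite trmx_mul map_mxM. Qed.

Lemma dotmx_mulmxl m n (A : 'M[K]_(m, n)) u v : '[u *m A, v] = '[u, v *m A ^t*].
Proof. by rewrite !dotmxE adjmxM trmxCK mulmxA. Qed.

Lemma dotmx_unitary m n (S : 'M[K]_(m, n)) u v :
  S \is unitarymx -> '[u *m S, v *m S] = '[u, v].
Proof. by move=> /unitarymxP SSt; rewrite dotmx_mulmxl -mulmxA SSt mulmx1. Qed.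

Lemma gram_adj m n (X : 'M[K]_(m, n)) : (gram X) ^t* = gram X.
Proof. by rewrite adjmxM trmxCK. Qed.

Lemma dotmx_gram m n (X : 'M[K]_(m, n)) u : '[u *m gram X, u] = '[u *m X ^t*].
Proof. by rewrite mulmxA dotmx_mulmxl. Qed.

Section Hermitian.
Variables (n : nat) (A : 'M[K]_n).
Hypothesis A_herm : A ^t* = A.
Local Notation P := (spectralmx A).
Local Notation d i := (spectral_diag A 0 i).

Lemma hermitian_spectralE : A = P ^t* *m diag_mx (spectral_diag A) *m P.
Proof.
have /orthomx_spectralP {1}-> : A \is normalmx by apply/normalmxP; rewrite A_herm.
by rewrite invmx_unitary // spectral_unitarymx.
Qed.

Lemma spectral_row_eigen i : row i P *m A = d i *: row i P.
Proof.
have /unitarymxP PPt := spectral_unitarymx A.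
rewrite {2}hermitian_spectralE -row_mul !mulmxA PPt mul1mx.
by rewrite row_mul row_diag_mx -scalemxAl -rowE.
Qed.

Lemma dnorm_spectral_row i : '[row i P] = 1.
Proof. by have /row_unitarymxP -> := spectral_unitarymx A; rewrite eqxx. Qed.

Lemma spectral_diag_dotmx i : d i = '[row i P *m A, row i P].
Proof.
by rewrite spectral_row_eigen linearZl_LR /= dnorm_spectral_row mulr1.
Qed.

Lemma spectral_diag_eigenvalue i : eigenvalue A (d i).
Proof.
apply/eigenvalueP; exists (row i P); first exact: spectral_row_eigen.
apply: contra_eqN (dnorm_spectral_row i) => /eqP->.
by rewrite linear0l eq_sym oner_eq0.
Qed.

Lemma det_hermitian : \det A = \prod_i d i.
Proof.
have /unitarymxP : P ^t* \is unitarymx by rewrite trmxC_unitary spectral_unitarymx.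
rewrite trmxCK => PtP.
by rewrite {1}hermitian_spectralE !det_mulmx det_diag mulrAC -det_mulmx PtP det1 mul1r.
Qed.

Lemma hermitian_dotmx_le mu :
  (forall t, eigenvalue A t -> t <= mu) -> forall u, '[u *m A, u] <= mu * '[u].
Proof.
move=> le_mu u.
have Pt_unitary : P ^t* \is unitarymx by rewrite trmxC_unitary spectral_unitarymx.
set w := u *m P ^t*.
have -> : '[u *m A, u] = \sum_i d i * (w 0 i * (w 0 i)^*).
  rewrite {1}hermitian_spectralE !mulmxA dotmx_mulmxl -/w dotmxE mxE.
  by apply: eq_bigr => i _; rewrite mul_mx_diag !mxE mulrCA mulrA.
rewrite -(dotmx_unitary u u Pt_unitary) -/w dotmxE mxE mulr_sumr.
apply: ler_sum => i _; rewrite !mxE.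
by apply: ler_wpM2r; [rewrite mul_conjC_ge0 | exact/le_mu/spectral_diag_eigenvalue].
Qed.

End Hermitian.

Lemma opnorm_sqr_le_eigenvalue m n (X : 'M[K]_(m, n)) mu :
  (forall t, eigenvalue (gram X) t -> t <= mu) -> opnorm_sqr_le X mu.
Proof.
by move=> le_mu u; rewrite -dotmx_gram; exact: (hermitian_dotmx_le (gram_adj X) le_mu u).
Qed.

Lemma gram_eigenvalue_le m n (X : 'M[K]_(m, n)) mu t :
  opnorm_sqr_le X mu -> eigenvalue (gram X) t -> t <= mu.
Proof.
move=> X_mu /eigenvalueP[v vXt v_neq0].
rewrite -(ler_pM2r (_ : 0 < '[v])) ?dnorm_gt0 //.
by rewrite -[t * _](linearZl_LR (@dotmx K n)) /= -vXt dotmx_gram.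
Qed.

Lemma opnorm_sqr_le_mul_adj m n p (X : 'M[K]_(m, n)) (S : 'M[K]_(p, n)) mu :
  S \is unitarymx -> opnorm_sqr_le X mu -> opnorm_sqr_le (X *m S ^t*) mu.
Proof.
move=> S_unitary X_mu u; rewrite adjmxM trmxCK mulmxA.
by rewrite -(dotmx_unitary u u S_unitary); apply: X_mu.
Qed.

Lemma det_gram_ge0 m n (X : 'M[K]_(m, n)) : 0 <= \det (gram X).
Proof.
rewrite det_hermitian ?gram_adj //; apply: prodr_ge0 => i _.
by rewrite spectral_diag_dotmx ?gram_adj // dotmx_gram dnorm_ge0.
Qed.

Lemma det_gram_le m n (X : 'M[K]_(m, n)) mu :
  opnorm_sqr_le X mu -> \det (gram X) <= mu ^+ n.
Proof.
move=> X_mu; rewrite det_hermitian ?gram_adj // -[n in mu ^+ n]card_ord -prodr_const.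
apply: ler_prod => i _; rewrite spectral_diag_dotmx ?gram_adj // dotmx_gram dnorm_ge0 /=.
by rewrite -[X in _ <= X]mulr1 -(dnorm_spectral_row (gram X) i) X_mu.
Qed.

Lemma adj_row_mx m n1 n2 (A : 'M[K]_(m, n1)) (B : 'M[K]_(m, n2)) :
  (row_mx A B) ^t* = col_mx (A ^t*) (B ^t*).
Proof. by rewrite tr_row_mx map_col_mx. Qed.

Lemma dotmx_row_mx0 n1 n2 (u : 'rV[K]_n2) : '[row_mx (0 : 'rV_n1) u] = '[u].
Proof. by rewrite !dotmxE adj_row_mx mul_row_col mul0mx add0r. Qed.

Lemma opnorm_sqr_le_row_mxr m n1 n2 (A : 'M[K]_(m, n1)) (B : 'M[K]_(m, n2)) mu :
  opnorm_sqr_le (row_mx A B) mu -> opnorm_sqr_le B mu.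
Proof.
move=> AB_mu u; have := AB_mu (row_mx 0 u).
by rewrite dotmx_row_mx0 adj_row_mx mul_row_col mul0mx add0r.
Qed.

Lemma opnorm_sqr_le_orthl m n (B C : 'M[K]_(m, n)) mu :
  B ^t* *m C = 0 -> opnorm_sqr_le (B + C) mu -> opnorm_sqr_le B mu.
Proof.
move=> BC0 BC_mu u; apply: le_trans (BC_mu u).
have uBC0 : '[u *m B ^t*, u *m C ^t*] = 0.
  by rewrite dotmxE adjmxM trmxCK -!mulmxA (mulmxA (B ^t*)) BC0 mul0mx mulmx0 mxE.
rewrite linearD /= (map_mxD Num.Def.conjC) mulmxDr (dnormD (@dotmx K m)) /=.
by rewrite uBC0 conjC0 !addr0 lerDl dnorm_ge0.
Qed.

Lemma gram_row_mx m n1 n2 (A : 'M[K]_(m, n1)) (B : 'M[K]_(m, n2)) :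
  gram (row_mx A B) = block_mx (gram A) (A ^t* *m B) (B ^t* *m A) (gram B).
Proof. by rewrite /gram adj_row_mx mul_col_row. Qed.

Lemma det_gram_row_mx_orth m n1 n2 (A : 'M[K]_(m, n1)) (B : 'M[K]_(m, n2)) :
  A ^t* *m B = 0 -> \det (gram (row_mx A B)) = \det (gram A) * \det (gram B).
Proof.
move=> AB0; have BA0 : B ^t* *m A = 0.
  by rewrite -[B ^t* *m A]trmxCK adjmxM trmxCK AB0 trmx0 (map_mx0 Num.Def.conjC).
by rewrite gram_row_mx BA0 det_ublock.
Qed.

Lemma det_gram_row_mx_shear m n1 n2 (A : 'M[K]_(m, n1)) (B : 'M[K]_(m, n2)) Y :
  \det (gram (row_mx A (B + A *m Y))) = \det (gram (row_mx A B)).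
Proof.
pose E : 'M[K]_(n1 + n2) := block_mx 1%:M Y 0 1%:M.
have -> : row_mx A (B + A *m Y) = row_mx A B *m E.
  by rewrite mul_row_block !mulmx1 mulmx0 addr0 addrC.
have detE : \det E = 1 by rewrite det_ublock !det1 mulr1.
rewrite /gram adjmxM -mulmxA (mulmxA (row_mx A B ^t*)) !det_mulmx.
by rewrite det_map_mx det_tr detE rmorph1 mul1r mulr1.
Qed.

Lemma det_gram_row_mx_eq0 m n1 n2 (A : 'M[K]_(m, n1)) (B : 'M[K]_(m, n2)) :
  \det (gram A) = 0 -> \det (gram (row_mx A B)) = 0.
Proof.
move=> /eqP/det0P[v v_neq0 vGA0].
have vA0 : v *m A ^t* = 0.
  apply/eqP; rewrite -(dnorm_eq0 (@dotmx K m)) /=.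
  by rewrite -dotmx_gram vGA0 linear0l.
apply/eqP/det0P; exists (row_mx v 0).
  by rewrite -row_mx0; apply: contra v_neq0 => /eqP/eq_row_mx[-> _].
by rewrite /gram adj_row_mx mulmxA mul_row_col vA0 mul0mx add0r mul0mx.
Qed.

Lemma det_gram_row_mx_le m n1 n2 (A : 'M[K]_(m, n1)) (B : 'M[K]_(m, n2)) mu :
  opnorm_sqr_le (row_mx A B) mu ->
  \det (gram (row_mx A B)) <= \det (gram A) * mu ^+ n2.
Proof.
move=> AB_mu; have [GA0|GA_neq0] := eqVneq (\det (gram A)) 0.
  by rewrite det_gram_row_mx_eq0 // GA0 mul0r.
(* B' is the component of B orthogonal to the columns of A: gram B' is the Schur
   complement of gram A in gram (row_mx A B). *)
pose Y := invmx (gram A) *m (A ^t* *m B).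
pose B' := B - A *m Y.
have AB'0 : A ^t* *m B' = 0.
  by rewrite mulmxBr mulmxA mulKVmx ?unitmxE ?unitfE // subrr.
have B'A0 : B' ^t* *m (A *m Y) = 0.
  by rewrite mulmxA -[A]trmxCK -adjmxM AB'0 trmx0 (map_mx0 Num.Def.conjC) mul0mx.
have BE : B = B' + A *m Y by rewrite subrK.
rewrite BE in AB_mu *; rewrite det_gram_row_mx_shear det_gram_row_mx_orth //.
rewrite ler_wpM2l ?det_gram_ge0 // det_gram_le //.
exact: opnorm_sqr_le_orthl B'A0 (opnorm_sqr_le_row_mxr AB_mu).
Qed.

Lemma colsub_mulmx_adj m n p (f : 'I_p -> 'I_n) (D : 'M[K]_(m, n)) :
  colsub f D = D *m (rowsub f 1%:M) ^t*.
Proof.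
have -> : (rowsub f 1%:M) ^t* = colsub f 1%:M :> 'M[K]_(n, p).
  by apply/matrixP => i j; rewrite !mxE conjC_nat eq_sym.
by rewrite mulmx_colsub mulmx1.
Qed.

Lemma rowsub1_mul_adj n p q (f : 'I_p -> 'I_n) (g : 'I_q -> 'I_n) :
  rowsub f 1%:M *m (rowsub g 1%:M) ^t* = \matrix_(i, j) (f i == g j)%:R :> 'M[K]_(p, q).
Proof. by rewrite -colsub_mulmx_adj; apply/matrixP => i j; rewrite !mxE. Qed.

Lemma col_mx_rowsub1_unitary n p q (f : 'I_p -> 'I_n) (g : 'I_q -> 'I_n) :
  injective f -> injective g -> (forall i j, f i != g j) ->
  col_mx (rowsub f 1%:M) (rowsub g 1%:M) \is @unitarymx K (p + q) n.
Proof.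
move=> f_inj g_inj fg; apply/unitarymxP.
rewrite tr_col_mx map_row_mx mul_col_row !rowsub1_mul_adj scalar_mx_block.
congr block_mx; apply/matrixP => i j; rewrite !mxE ?(inj_eq f_inj) ?(inj_eq g_inj) //.
  by rewrite (negbTE (fg i j)).
by rewrite eq_sym (negbTE (fg j i)).
Qed.

Lemma det_gram_mul_adj m n (D : 'M[K]_(m, n)) (T : 'M[K]_n) :
  T \is unitarymx -> \det (gram (D *m T ^t*)) = \det (gram D).
Proof.
move=> /unitarymxP TTt; rewrite /gram adjmxM trmxCK mulmxA -(mulmxA T).
by rewrite !det_mulmx mulrAC -det_mulmx TTt det1 mul1r.
Qed.

Lemma det_gram_colsub_le m l r (D : 'M[K]_(m, l + r)) (f : 'I_l -> 'I_(l + r)) mu :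
  injective f -> opnorm_sqr_le D mu ->
  \det (gram D) <= \det (gram (colsub f D)) * mu ^+ r.
Proof.
move=> f_inj D_mu; have [h [h_inj fh]] := ord_complement f_inj.
pose T : 'M[K]_(l + r) := col_mx (rowsub f 1%:M) (rowsub h 1%:M).
have T_unitary : T \is unitarymx := col_mx_rowsub1_unitary f_inj h_inj fh.
have DT : D *m T ^t* = row_mx (colsub f D) (colsub h D).
  by rewrite tr_col_mx map_row_mx mul_mx_row -!colsub_mulmx_adj.
rewrite -(det_gram_mul_adj D T_unitary) DT; apply: det_gram_row_mx_le.
by rewrite -DT; apply: opnorm_sqr_le_mul_adj.
Qed.

Lemma gram_colsub_eigenvalue_le m n p (D : 'M[K]_(m, n)) (f : 'I_p -> 'I_n) mu t :
  injective f -> opnorm_sqr_le D mu -> eigenvalue (gram (colsub f D)) t -> t <= mu.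
Proof.
move=> f_inj D_mu; apply: gram_eigenvalue_le; rewrite colsub_mulmx_adj.
apply: opnorm_sqr_le_mul_adj D_mu; apply/unitarymxP.
by rewrite rowsub1_mul_adj; apply/matrixP => i j; rewrite !mxE (inj_eq f_inj).
Qed.

End HermitianForms.

Section RealGram.
Variable R : rcfType.
Local Open Scope sesquilinear_scope.
Local Notation toC := (real_complex R).

Lemma gram_map_real m n (X : 'M[R]_(m, n)) :
  gram (map_mx toC X) = map_mx toC (X^T *m X).
Proof.
rewrite /gram map_mxM map_trmx; congr (_ *m _).
by apply/matrixP => i j; rewrite !mxE conj_Creal // complex_real.
Qed.

Lemma opnorm_sqr_le_real m n (C : 'M[R]_(m, n)) (c : 'I_n -> R) mu :
  char_poly (C^T *m C) = \prod_i ('X - (c i)%:P) -> (forall i, c i <= mu) ->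
  opnorm_sqr_le (map_mx toC C) (toC mu).
Proof.
move=> cpC c_mu; apply: opnorm_sqr_le_eigenvalue.
have cpCC : char_poly (gram (map_mx toC C)) = \prod_i ('X - (toC (c i))%:P).
  rewrite gram_map_real -map_char_poly cpC rmorph_prod.
  by apply: eq_bigr => i _; rewrite /= map_polyXsubC.
by move=> t /(eigenvalue_split_char_poly cpCC)[i ->]; rewrite lecR.
Qed.

Variables (m l r : nat) (C : 'M[R]_(m, l + r)) (f : 'I_l -> 'I_(l + r)).
Variables (c : 'I_(l + r) -> R) (mu : R).
Hypotheses (f_inj : injective f) (cpC : char_poly (C^T *m C) = \prod_i ('X - (c i)%:P)).
Hypothesis c_mu : forall i, c i <= mu.

Lemma det_gram_colsub_le_real :
  \det (C^T *m C) <= \det ((colsub f C)^T *m colsub f C) * mu ^+ r.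
Proof.
rewrite -lecR rmorphM rmorphXn /= -!det_map_mx -!gram_map_real map_mxsub.
exact: det_gram_colsub_le f_inj (opnorm_sqr_le_real cpC c_mu).
Qed.

Lemma gram_colsub_eigenvalue_le_real t :
  eigenvalue ((colsub f C)^T *m colsub f C) t -> t <= mu.
Proof.
rewrite -lecR -(eigenvalue_map toC) -gram_map_real map_mxsub.
exact: gram_colsub_eigenvalue_le f_inj (opnorm_sqr_le_real cpC c_mu).
Qed.

End RealGram.

Section SingularValues.
Variable R : realType.

Lemma sigma1_ge0 r (s : 'I_r -> R) : 0 <= sigma1 s.
Proof. exact: bigmax_ge_id. Qed.

Lemma le_sigma1 r (s : 'I_r -> R) i : s i <= sigma1 s.
Proof. exact: le_bigmax. Qed.

Lemma rvolE r (s : 'I_r -> R) : rvol s = (\prod_i s i) / sigma1 s ^+ r.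
Proof. by rewrite /rvol prodf_div prodr_const card_ord. Qed.

Variables (m r : nat) (X : 'M[R]_(m, r)) (s : 'I_r -> R).
Hypothesis svX : is_singular_values X s.

Lemma singular_values_ge0 i : 0 <= s i.
Proof. by case: svX. Qed.

Lemma prod_singular_values_ge0 : 0 <= \prod_i s i.
Proof. by apply: prodr_ge0 => i _; apply: singular_values_ge0. Qed.

Lemma det_gram_singular_values : \det (X^T *m X) = (\prod_i s i) ^+ 2.
Proof. by case: svX => _ [_ cpX]; rewrite (det_split_char_poly cpX) prodrXl. Qed.

Lemma singular_value_eigenvalue i : eigenvalue (X^T *m X) (s i ^+ 2).
Proof.
case: svX => _ [_ cpX]; rewrite eigenvalue_root_char cpX rootE horner_prod.
by apply/prodf_eq0; exists i => //; rewrite hornerXsubC subrr.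
Qed.

Lemma rvol_le1 : rvol s <= 1.
Proof.
apply: prodr_ile1 => i _; rewrite divr_ge0 ?singular_values_ge0 ?sigma1_ge0 //=.
have [->|sigma_neq0] := eqVneq (sigma1 s) 0; first by rewrite invr0 mulr0.
by rewrite ler_pdivrMr ?mul1r ?le_sigma1 // lt_def sigma_neq0 sigma1_ge0.
Qed.

End SingularValues.

Section ColumnSubmatrix.
Variables (R : realType) (m l r : nat) (C : 'M[R]_(m, l + r)).
Variables (f : 'I_l -> 'I_(l + r)) (sC : 'I_(l + r) -> R) (sCl : 'I_l -> R).
Hypotheses (f_inj : injective f) (svC : is_singular_values C sC).
Hypothesis svCl : is_singular_values (colsub f C) sCl.

Let cpC := svC.2.2.

Let sqr_singular_value_le i : sC i ^+ 2 <= sigma1 sC ^+ 2.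
Proof.
by rewrite ler_sqr ?nnegrE ?le_sigma1 ?sigma1_ge0 ?(singular_values_ge0 svC).
Qed.

Lemma sigma1_colsub_le : sigma1 sCl <= sigma1 sC.
Proof.
apply: bigmax_le (sigma1_ge0 sC) _ => i _.
rewrite -ler_sqr ?nnegrE ?sigma1_ge0 ?(singular_values_ge0 svCl) //.
exact: gram_colsub_eigenvalue_le_real f_inj cpC sqr_singular_value_le _
  (singular_value_eigenvalue svCl i).
Qed.

Lemma prod_singular_values_colsub_le :
  \prod_i sC i <= \prod_i sCl i * sigma1 sC ^+ r.
Proof.
rewrite -ler_sqr ?nnegrE ?mulr_ge0 ?exprn_ge0 ?sigma1_ge0
  ?(prod_singular_values_ge0 svC) ?(prod_singular_values_ge0 svCl) //.
rewrite exprMn -exprM mulnC exprM -(det_gram_singular_values svC).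
rewrite -(det_gram_singular_values svCl).
exact: det_gram_colsub_le_real f_inj cpC sqr_singular_value_le.
Qed.

Lemma rvol_colsub_le : rvol sC <= rvol sCl.
Proof.
have sigma_ge0 := sigma1_ge0 sC.
apply: (@le_trans _ _ (\prod_i (sCl i / sigma1 sC))).
  rewrite rvolE prodf_div prodr_const card_ord.
  apply: le_trans (ler_mulr_expr_divD l r (prod_singular_values_ge0 svCl) sigma_ge0).
  by rewrite ler_wpM2r ?invr_ge0 ?exprn_ge0 ?prod_singular_values_colsub_le.
apply: ler_prod => i _; rewrite divr_ge0 ?(singular_values_ge0 svCl) //=.
exact: ler_wdiv2l (singular_values_ge0 svCl i) (le_sigma1 sCl i) sigma1_colsub_le.
Qed.

End ColumnSubmatrix.

Lemma col_neq0_full_rank (F : fieldType) m k (C : 'M[F]_(m, k)) j :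
  \rank C = k -> col j C != 0.
Proof.
move=> rkC; have Ct_free : row_free C^T by rewrite /row_free mxrank_tr rkC.
rewrite -[C]trmxK -tr_row trmx_eq0 rowE mulmx_free_eq0 //.
by apply/eqP => /matrixP/(_ 0 j)/eqP; rewrite !mxE !eqxx oner_eq0.
Qed.

Lemma det_gram_col_neq0 (F : realFieldType) m (x : 'cV[F]_m) :
  x != 0 -> \det (x^T *m x) != 0.
Proof.
apply: contra => /eqP; rewrite det_mx11 mxE.
move/eqP; rewrite psumr_eq0 => [/allP x0|i _]; last by rewrite !mxE -expr2 sqr_ge0.
apply/eqP/matrixP => i j; rewrite ord1 !mxE.
by have := x0 i (mem_index_enum _); rewrite !mxE mulf_eq0 orbb => /eqP.
Qed.

Lemma rvol_col (R : realType) m (x : 'cV[R]_m) (s : 'I_1 -> R) :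
  x != 0 -> is_singular_values x s -> rvol s = 1.
Proof.
move=> x_neq0 svx; have s_ge0 := singular_values_ge0 svx ord0.
have s_neq0 : s ord0 != 0.
  apply: contraNneq (det_gram_col_neq0 x_neq0) => s0.
  by rewrite (det_gram_singular_values svx) big_ord1 s0 expr0n.
have sigma1E : sigma1 s = s ord0.
  by rewrite /sigma1 big_ord_recl big_ord0; apply/max_idPl.
by rewrite /rvol big_ord1 sigma1E divff.
Qed.

Unset Implicit Arguments.

Theorem lemma3 (R : realType) (m k l : nat) (C : 'M[R]_(m, k))
    (f : 'I_l -> 'I_k) (j : 'I_k)
    (sC : 'I_k -> R) (sCl : 'I_l -> R) (sC1 : 'I_1 -> R) :
  \rank C = k -> (1 <= l)%N -> (l < k)%N -> injective f ->
  is_singular_values C sC ->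
  is_singular_values (colsub f C) sCl ->
  is_singular_values (col j C) sC1 ->
  rvol sC <= rvol sCl /\ rvol sCl <= rvol sC1 /\ rvol sC1 = 1.
Proof.
move=> rkC _ lt_lk f_inj svC svCl svC1.
have rvol_C1 : rvol sC1 = 1 := rvol_col (col_neq0_full_rank j rkC) svC1.
have [r kE] : exists r, k = (l + r)%N by exists (k - l)%N; rewrite subnKC // ltnW.
subst k; rewrite rvol_C1; split; first exact: rvol_colsub_le svC svCl.
by split; first exact: rvol_le1 svCl.
Qed.
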